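(* Let $\ell:K(H\times\mathrm{Id})\to HM$ be an abstract GSOS rule with $\ell$-interpretation $b:KC\to C$, let $k=c^{-1}\cdot Hb^\sharp:HMC\to C$ and $k'=b^\sharp\cdot Mk:MHMC\to C$. Then $(C,k')$ is a completely iterative algebra for the functor $MHM$.
   Context: Let $\mathcal A$ be a category with binary products and coproducts, let $H:\mathcal A\to\mathcal A$ be a functor with a terminal coalgebra $c:C\to HC$ (so $c$ is an isomorphism by Lambek's lemma), and let $K:\mathcal A\to\mathcal A$ be a functor such that every object $X$ has a free $K$-algebra $\varphi_X:KMX\to MX$ with universal morphism $\eta_X:X\to MX$. Then $(M,\eta,\mu)$ is the free monad on $K$, and $\kappa=\varphi\cdot K\eta:K\to M$. For a $K$-algebra $a:KA\to A$ let $a^\sharp:MA\to A$ be the unique $K$-algebra homomorphism with $a^\sharp\cdot\eta_A=\mathrm{id}_A$; it is an Eilenberg–Moore algebra for $M$. An abstract GSOS rule is a natural transformation $\ell:K(H\times\mathrm{Id})\to HM$; its $\ell$-interpretation is the unique morphism $b:KC\to C$ with $c\cdot b=Hb^\sharp\cdot\ell_C\cdot K\langle c,\mathrm{id}_C\rangle$. For an endofunctor $G$, a flat equation morphism in an object $A$ is a morphism $e:X\to GX+A$; a $G$-algebra $a:GA\to A$ is a completely iterative algebra (cia) if every flat equation morphism $e:X\to GX+A$ has a unique solution, i.e. a unique $e^\dagger:X\to A$ with $e^\dagger=[a,\mathrm{id}_A]\cdot(Ge^\dagger+\mathrm{id}_A)\cdot e$. *)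

(* Hom-sets use Leibniz equality. *)
Set Implicit Arguments.
Unset Strict Implicit.

Record Category := {
  Obj :> Type;
  Hom : Obj -> Obj -> Type;
  idm : forall X, Hom X X;
  comp : forall X Y Z, Hom Y Z -> Hom X Y -> Hom X Z;
  comp_id_l : forall X Y (f : Hom X Y), comp (idm Y) f = f;
  comp_id_r : forall X Y (f : Hom X Y), comp f (idm X) = f;
  comp_assoc : forall X Y Z W (h : Hom Z W) (g : Hom Y Z) (f : Hom X Y),
      comp h (comp g f) = comp (comp h g) f
}.
Arguments Hom {c} _ _.
Arguments idm {c} X.
Arguments comp {c X Y Z} _ _.

Notation "g ∘ f" := (comp g f) (at level 40, left associativity).

Record Functor (A : Category) := {
  fobj :> A -> A;
  fmap : forall X Y : A, Hom X Y -> Hom (fobj X) (fobj Y);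
  fmap_id : forall X : A, fmap (idm X) = idm (fobj X);
  fmap_comp : forall (X Y Z : A) (g : Hom Y Z) (f : Hom X Y),
      fmap (g ∘ f) = fmap g ∘ fmap f
}.
Arguments fmap {A} f0 {X Y} _.

Lemma Fcomp_id (A : Category) (F G : Functor A) (X : A) :
  fmap F (fmap G (idm X)) = idm (F (G X)).
Proof. rewrite !fmap_id; reflexivity. Qed.

Lemma Fcomp_comp (A : Category) (F G : Functor A) (X Y Z : A)
  (g : Hom Y Z) (f : Hom X Y) :
  fmap F (fmap G (g ∘ f)) = fmap F (fmap G g) ∘ fmap F (fmap G f).
Proof. rewrite !fmap_comp; reflexivity. Qed.

Definition Fcomp (A : Category) (F G : Functor A) : Functor A :=
  {| fobj := fun X => F (G X);
     fmap := fun X Y f => fmap F (fmap G f);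
     fmap_id := Fcomp_id F G; fmap_comp := Fcomp_comp F G |}.

Record BinProducts (A : Category) := {
  bprod : A -> A -> A;
  pi1 : forall X Y : A, Hom (bprod X Y) X;
  pi2 : forall X Y : A, Hom (bprod X Y) Y;
  pairing : forall Z X Y : A, Hom Z X -> Hom Z Y -> Hom Z (bprod X Y);
  pi1_pair : forall Z X Y (f : Hom Z X) (g : Hom Z Y), pi1 X Y ∘ pairing f g = f;
  pi2_pair : forall Z X Y (f : Hom Z X) (g : Hom Z Y), pi2 X Y ∘ pairing f g = g;
  pair_unique : forall Z X Y (f : Hom Z X) (g : Hom Z Y) (h : Hom Z (bprod X Y)),
      pi1 X Y ∘ h = f -> pi2 X Y ∘ h = g -> h = pairing f g
}.
Arguments bprod {A} P _ _ : rename.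
Arguments pi1 {A} P {X Y} : rename.
Arguments pi2 {A} P {X Y} : rename.
Arguments pairing {A} P {Z X Y} _ _ : rename.

Record BinCoproducts (A : Category) := {
  bcoprod : A -> A -> A;
  inl_ : forall X Y : A, Hom X (bcoprod X Y);
  inr_ : forall X Y : A, Hom Y (bcoprod X Y);
  copair : forall X Y Z : A, Hom X Z -> Hom Y Z -> Hom (bcoprod X Y) Z;
  copair_inl : forall X Y Z (f : Hom X Z) (g : Hom Y Z), copair f g ∘ inl_ X Y = f;
  copair_inr : forall X Y Z (f : Hom X Z) (g : Hom Y Z), copair f g ∘ inr_ X Y = g;
  copair_unique : forall X Y Z (f : Hom X Z) (g : Hom Y Z) (h : Hom (bcoprod X Y) Z),
      h ∘ inl_ X Y = f -> h ∘ inr_ X Y = g -> h = copair f g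
}.
Arguments bcoprod {A} S _ _ : rename.
Arguments inl_ {A} S {X Y} : rename.
Arguments inr_ {A} S {X Y} : rename.
Arguments copair {A} S {X Y Z} _ _ : rename.

Definition coprod_map (A : Category) (S : BinCoproducts A) (X Y X' Y' : A)
  (f : Hom X X') (g : Hom Y Y') : Hom (bcoprod S X Y) (bcoprod S X' Y') :=
  copair S (inl_ S ∘ f) (inr_ S ∘ g).

Definition is_terminal_coalgebra (A : Category) (H : Functor A) (C : A)
  (c : Hom C (H C)) : Prop :=
  forall (X : A) (x : Hom X (H X)), exists! f : Hom X C, c ∘ f = fmap H f ∘ x.

(* Every object X has a free K-algebra phi_X : K(MX) -> MX with universal
   morphism eta_X : X -> MX; [ext a f] is the unique K-algebra homomorphism
   MX -> A extending f : X -> A for the algebra a : KA -> A. *)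
Record FreeAlgebras (A : Category) (K : Functor A) := {
  Mo : A -> A;
  phi : forall X : A, Hom (K (Mo X)) (Mo X);
  eta : forall X : A, Hom X (Mo X);
  ext : forall (X Y : A), Hom (K Y) Y -> Hom X Y -> Hom (Mo X) Y;
  ext_eta : forall X Y (a : Hom (K Y) Y) (f : Hom X Y), ext a f ∘ eta X = f;
  ext_hom : forall X Y (a : Hom (K Y) Y) (f : Hom X Y),
      ext a f ∘ phi X = a ∘ fmap K (ext a f);
  ext_unique : forall X Y (a : Hom (K Y) Y) (f : Hom X Y) (h : Hom (Mo X) Y),
      h ∘ eta X = f -> h ∘ phi X = a ∘ fmap K h -> h = ext a f
}.
Arguments Mo {A K} F _ : rename.
Arguments phi {A K} F X : rename.
Arguments eta {A K} F X : rename.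
Arguments ext {A K} F {X Y} _ _ : rename.

Definition sharp (A : Category) (K : Functor A) (F : FreeAlgebras K) (Y : A)
  (a : Hom (K Y) Y) : Hom (Mo F Y) Y := ext F a (idm Y).

Definition Mmap (A : Category) (K : Functor A) (F : FreeAlgebras K) (X Y : A)
  (f : Hom X Y) : Hom (Mo F X) (Mo F Y) := ext F (phi F Y) (eta F Y ∘ f).

Lemma Mmap_id (A : Category) (K : Functor A) (F : FreeAlgebras K) (X : A) :
  Mmap F (idm X) = idm (Mo F X).
Proof.
  unfold Mmap. symmetry. apply ext_unique.
  - rewrite comp_id_l, comp_id_r; reflexivity.
  - rewrite comp_id_l, fmap_id, comp_id_r; reflexivity.
Qed.

Lemma Mmap_comp (A : Category) (K : Functor A) (F : FreeAlgebras K) (X Y Z : A)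
  (g : Hom Y Z) (f : Hom X Y) : Mmap F (g ∘ f) = Mmap F g ∘ Mmap F f.
Proof.
  unfold Mmap. symmetry. apply ext_unique.
  - rewrite <- comp_assoc, ext_eta, comp_assoc, ext_eta, comp_assoc; reflexivity.
  - rewrite <- comp_assoc, ext_hom, comp_assoc, ext_hom, <- comp_assoc,
      <- fmap_comp; reflexivity.
Qed.

Definition Mfun (A : Category) (K : Functor A) (F : FreeAlgebras K) : Functor A :=
  {| fobj := Mo F; fmap := fun X Y f => Mmap F f;
     fmap_id := Mmap_id F; fmap_comp := Mmap_comp F |}.

Definition is_gsos_rule (A : Category) (P : BinProducts A) (H K : Functor A)
  (F : FreeAlgebras K) (l : forall X : A, Hom (K (bprod P (H X) X)) (H (Mo F X))) : Prop :=
  forall (X Y : A) (f : Hom X Y),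
    l Y ∘ fmap K (pairing P (fmap H f ∘ pi1 P) (f ∘ pi2 P)) = fmap H (Mmap F f) ∘ l X.

Definition is_interpretation (A : Category) (P : BinProducts A) (H K : Functor A)
  (F : FreeAlgebras K) (l : forall X : A, Hom (K (bprod P (H X) X)) (H (Mo F X)))
  (C : A) (c : Hom C (H C)) (b : Hom (K C) C) : Prop :=
  c ∘ b = fmap H (sharp F b) ∘ l C ∘ fmap K (pairing P c (idm C)).

Definition is_cia (A : Category) (S : BinCoproducts A) (G : Functor A) (A0 : A)
  (a : Hom (G A0) A0) : Prop :=
  forall (X : A) (e : Hom X (bcoprod S (G X) A0)),
    exists! s : Hom X A0,
      s = copair S a (idm A0) ∘ coprod_map S (fmap G s) (idm A0) ∘ e.

Set Implicit Arguments.
Unset Strict Implicit.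

(* Let (C, c) be the terminal H-coalgebra and b : KC -> C the l-interpretation;
   for g : X -> C write g^b := ext b g : MX -> C for its extension to a
   K-algebra morphism, so that b# = id^b.

   1. Lifting.  Every beta : L -> HML extends to a coalgebra
      beta+ : ML -> HML, the first component of the free extension of
      <beta, eta> along the K-algebra <Hmu . l_ML, phi . K pi2> on HML x ML.
      It satisfies beta+ . eta = beta, beta+ . phi = Hmu . l . K<beta+, id>
      and beta+ . mu = Hmu . (Heta . beta+)+.
   2. Unique solutions.  For every beta : L -> HML there is exactly one
      g : L -> C with c . g = H(g^b) . beta: any such g makes g^b a coalgebra
      morphism (ML, beta+) -> (C, c), and conversely the unique coalgebra
      morphism h out of (ML, beta+) equals (h . eta)^b.
   3. Flat equations.  A flat equation e : X -> MHMX + C is encoded as a map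
      beta : HMX + C -> HM(HMX + C); its solutions correspond exactly to the
      solutions g of beta in the sense of step 2.
   The theorem follows since k' . MHMs = (c^-1 . H(s^b))^b for all s : X -> C. *)

Section Products.
Variables (A : Category) (P : BinProducts A).

Lemma pairing_comp (W Z X Y : A) (f : Hom Z X) (g : Hom Z Y) (h : Hom W Z) :
  pairing P f g ∘ h = pairing P (f ∘ h) (g ∘ h).
Proof.
  apply pair_unique; rewrite comp_assoc; [rewrite pi1_pair | rewrite pi2_pair];
    reflexivity.
Qed.

Lemma pairing_ext (Z X Y : A) (h h' : Hom Z (bprod P X Y)) :
  pi1 P ∘ h = pi1 P ∘ h' -> pi2 P ∘ h = pi2 P ∘ h' -> h = h'.
Proof.
  intros E1 E2. rewrite (pair_unique E1 E2).
  symmetry; apply pair_unique; reflexivity.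
Qed.

Lemma pairing_inj1 (Z X Y : A) (f f' : Hom Z X) (g g' : Hom Z Y) :
  pairing P f g = pairing P f' g' -> f = f'.
Proof.
  intro E. rewrite <- (pi1_pair P f g), E. apply pi1_pair.
Qed.

End Products.

Section Coproducts.
Variables (A : Category) (S : BinCoproducts A).

Lemma copair_comp (X Y Z W : A) (f : Hom X Z) (g : Hom Y Z) (h : Hom Z W) :
  h ∘ copair S f g = copair S (h ∘ f) (h ∘ g).
Proof.
  apply copair_unique; rewrite <- comp_assoc;
    [rewrite copair_inl | rewrite copair_inr]; reflexivity.
Qed.

Lemma copair_ext (X Y Z : A) (h h' : Hom (bcoprod S X Y) Z) :
  h ∘ inl_ S = h' ∘ inl_ S -> h ∘ inr_ S = h' ∘ inr_ S -> h = h'.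
Proof.
  intros E1 E2. rewrite (copair_unique E1 E2).
  symmetry; apply copair_unique; reflexivity.
Qed.

End Coproducts.

Section FreeMonad.
Variables (A : Category) (K : Functor A) (F : FreeAlgebras K).

Lemma ext_fusion (X Y Y' : A) (a : Hom (K Y) Y) (a' : Hom (K Y') Y')
  (h : Hom Y Y') (f : Hom X Y) :
  h ∘ a = a' ∘ fmap K h -> h ∘ ext F a f = ext F a' (h ∘ f).
Proof.
  intro Hh. apply ext_unique.
  - rewrite <- comp_assoc, ext_eta; reflexivity.
  - rewrite <- comp_assoc, ext_hom, comp_assoc, Hh, <- comp_assoc, <- fmap_comp;
      reflexivity.
Qed.

Lemma ext_phi_eta (X : A) : ext F (phi F X) (eta F X) = idm (Mo F X).
Proof.
  symmetry; apply ext_unique.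
  - apply comp_id_l.
  - rewrite comp_id_l, fmap_id, comp_id_r; reflexivity.
Qed.

Lemma ext_kleisli (X Y Z : A) (a : Hom (K Z) Z) (f : Hom Y Z) (g : Hom X (Mo F Y)) :
  ext F a f ∘ ext F (phi F Y) g = ext F a (ext F a f ∘ g).
Proof. apply ext_fusion, ext_hom. Qed.

Lemma ext_Mmap (X Y Z : A) (a : Hom (K Z) Z) (g : Hom Y Z) (f : Hom X Y) :
  ext F a g ∘ Mmap F f = ext F a (g ∘ f).
Proof. unfold Mmap. rewrite ext_kleisli, comp_assoc, ext_eta. reflexivity. Qed.

Lemma sharp_Mmap (X Y : A) (a : Hom (K Y) Y) (f : Hom X Y) :
  sharp F a ∘ Mmap F f = ext F a f.
Proof. unfold sharp. rewrite ext_Mmap, comp_id_l. reflexivity. Qed.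

Definition mu (X : A) : Hom (Mo F (Mo F X)) (Mo F X) := ext F (phi F X) (idm _).

Lemma mu_eta (X : A) : mu X ∘ eta F (Mo F X) = idm _.
Proof. apply ext_eta. Qed.

Lemma mu_Meta (X : A) : mu X ∘ Mmap F (eta F X) = idm _.
Proof. unfold mu. rewrite ext_Mmap, comp_id_l. apply ext_phi_eta. Qed.

Lemma mu_phi (X : A) : mu X ∘ phi F _ = phi F X ∘ fmap K (mu X).
Proof. apply ext_hom. Qed.

Lemma mu_assoc (X : A) : mu X ∘ mu (Mo F X) = mu X ∘ Mmap F (mu X).
Proof.
  unfold mu. rewrite ext_kleisli, ext_Mmap, comp_id_r, comp_id_l. reflexivity.
Qed.

Lemma ext_mu (X Y : A) (a : Hom (K Y) Y) (g : Hom X Y) :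
  ext F a g ∘ mu X = ext F a (ext F a g).
Proof. unfold mu. rewrite ext_kleisli, comp_id_r. reflexivity. Qed.

End FreeMonad.

Section GSOSLifting.
Variables (A : Category) (P : BinProducts A) (H K : Functor A) (F : FreeAlgebras K).
Variable l : forall X : A, Hom (K (bprod P (H X) X)) (H (Mo F X)).
Hypothesis Hl : is_gsos_rule l.

(* Naturality of the GSOS rule, in the form needed along a coalgebra map
   f : (X, u) -> (Y, H f . u). *)
Lemma gsos_natural (X Y : A) (f : Hom X Y) (u : Hom X (H X)) :
  l Y ∘ fmap K (pairing P (fmap H f ∘ u) f)
  = fmap H (Mmap F f) ∘ l X ∘ fmap K (pairing P u (idm X)).
Proof.
  assert (Ep : pairing P (fmap H f ∘ u) f
               = pairing P (fmap H f ∘ pi1 P) (f ∘ pi2 P) ∘ pairing P u (idm X)).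
  { rewrite pairing_comp, <- !comp_assoc, pi1_pair, pi2_pair, comp_id_r.
    reflexivity. }
  rewrite Ep, fmap_comp, comp_assoc, Hl. reflexivity.
Qed.

Definition gsos_alg (L : A) :
  Hom (K (bprod P (H (Mo F L)) (Mo F L))) (bprod P (H (Mo F L)) (Mo F L)) :=
  pairing P (fmap H (mu F L) ∘ l (Mo F L)) (phi F L ∘ fmap K (pi2 P)).

Definition lift (L : A) (beta : Hom L (H (Mo F L))) : Hom (Mo F L) (H (Mo F L)) :=
  pi1 P ∘ ext F (gsos_alg L) (pairing P beta (eta F L)).

Lemma ext_gsos_alg (L : A) (beta : Hom L (H (Mo F L))) :
  ext F (gsos_alg L) (pairing P beta (eta F L)) = pairing P (lift beta) (idm _).
Proof.
  apply pair_unique; [reflexivity |].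
  assert (Hp : pi2 P ∘ gsos_alg L = phi F L ∘ fmap K (pi2 P)) by apply pi2_pair.
  rewrite (ext_fusion F _ Hp), pi2_pair. apply ext_phi_eta.
Qed.

Lemma lift_eta (L : A) (beta : Hom L (H (Mo F L))) : lift beta ∘ eta F L = beta.
Proof. unfold lift. rewrite <- comp_assoc, ext_eta, pi1_pair. reflexivity. Qed.

Lemma lift_phi (L : A) (beta : Hom L (H (Mo F L))) :
  lift beta ∘ phi F L
  = fmap H (mu F L) ∘ l (Mo F L) ∘ fmap K (pairing P (lift beta) (idm _)).
Proof.
  unfold lift at 1.
  rewrite <- comp_assoc, ext_hom, ext_gsos_alg, comp_assoc.
  unfold gsos_alg. rewrite pi1_pair. reflexivity.
Qed.

Lemma lift_mu (L : A) (beta : Hom L (H (Mo F L))) :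
  lift beta ∘ mu F L
  = fmap H (mu F L) ∘ lift (fmap H (eta F (Mo F L)) ∘ lift beta).
Proof.
  set (beta2 := lift (fmap H (eta F (Mo F L)) ∘ lift beta)).
  apply (@pairing_inj1 _ P _ _ _ _ _ (mu F L) (mu F L)).
  transitivity (ext F (gsos_alg L) (pairing P (lift beta) (idm _))).
  - transitivity (pairing P (lift beta) (idm _) ∘ mu F L).
    { rewrite pairing_comp, comp_id_l. reflexivity. }
    rewrite <- ext_gsos_alg, ext_mu, ext_gsos_alg. reflexivity.
  - symmetry. apply ext_unique.
    + rewrite pairing_comp, <- comp_assoc. unfold beta2.
      rewrite lift_eta, mu_eta, comp_assoc, <- fmap_comp, mu_eta, fmap_id, comp_id_l.
      reflexivity.
    + apply pairing_ext; unfold gsos_alg; rewrite !comp_assoc.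
      * rewrite !pi1_pair, <- !comp_assoc, gsos_natural.
        unfold beta2. rewrite lift_phi, !comp_assoc, <- !fmap_comp, mu_assoc.
        reflexivity.
      * rewrite !pi2_pair, <- comp_assoc, <- fmap_comp, pi2_pair, mu_phi.
        reflexivity.
Qed.

End GSOSLifting.

Section Interpretation.
Variables (A : Category) (P : BinProducts A) (H K : Functor A) (F : FreeAlgebras K).
Variable l : forall X : A, Hom (K (bprod P (H X) X)) (H (Mo F X)).
Hypothesis Hl : is_gsos_rule l.
Variables (C : A) (c : Hom C (H C)).
Hypothesis Hterm : is_terminal_coalgebra c.
Variable b : Hom (K C) C.
Hypothesis Hb : is_interpretation l c b.

Lemma coalgebra_morphism_unique (X : A) (x : Hom X (H X)) (f g : Hom X C) :
  c ∘ f = fmap H f ∘ x -> c ∘ g = fmap H g ∘ x -> f = g.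
Proof.
  intros Ef Eg. destruct (Hterm x) as [f0 [_ U]].
  rewrite <- (U f Ef), <- (U g Eg). reflexivity.
Qed.

Lemma ext_coalgebra_morphism (L : A) (beta : Hom L (H (Mo F L))) (g : Hom L C) :
  c ∘ g = fmap H (ext F b g) ∘ beta ->
  c ∘ ext F b g = fmap H (ext F b g) ∘ lift l beta.
Proof.
  intro Hg. set (E := ext F b g).
  set (algC := pairing P (fmap H (sharp F b) ∘ l C) (b ∘ fmap K (pi2 P))).
  assert (HE : E ∘ phi F L = b ∘ fmap K E) by apply ext_hom.
  (* Both <c . E, E> and <HE . beta+, E> extend <c . g, g> along algC. *)
  apply (@pairing_inj1 _ P _ _ _ _ _ E E).
  transitivity (ext F algC (pairing P (c ∘ g) g)); [| symmetry];
    apply ext_unique.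
  - rewrite pairing_comp, <- comp_assoc. unfold E. rewrite ext_eta. reflexivity.
  - apply pairing_ext; unfold algC; rewrite !comp_assoc, ?pi1_pair, ?pi2_pair.
    + rewrite <- !comp_assoc, HE, comp_assoc, Hb, <- !comp_assoc, <- fmap_comp,
        pairing_comp, comp_id_l. reflexivity.
    + rewrite <- comp_assoc, <- fmap_comp, pi2_pair. exact HE.
  - rewrite pairing_comp, <- comp_assoc, lift_eta. unfold E.
    rewrite ext_eta, <- Hg. reflexivity.
  - apply pairing_ext; unfold algC; rewrite !comp_assoc, ?pi1_pair, ?pi2_pair.
    + rewrite <- !comp_assoc, gsos_natural, lift_phi by exact Hl.
      rewrite !comp_assoc, <- !fmap_comp, sharp_Mmap. unfold E. rewrite ext_mu.
      reflexivity.
    + rewrite <- comp_assoc, <- fmap_comp, pi2_pair. exact HE.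
Qed.

Lemma lift_morphism_is_ext (L : A) (beta : Hom L (H (Mo F L))) (h : Hom (Mo F L) C) :
  c ∘ h = fmap H h ∘ lift l beta -> h = ext F b (h ∘ eta F L).
Proof.
  intro Hh.
  set (beta' := fmap H (eta F (Mo F L)) ∘ lift l beta).
  assert (Ehm : ext F b h = h ∘ mu F L).
  { apply (@coalgebra_morphism_unique _ (lift l beta')).
    - apply ext_coalgebra_morphism. unfold beta'.
      rewrite comp_assoc, <- fmap_comp, ext_eta. exact Hh.
    - rewrite comp_assoc, Hh, <- comp_assoc. unfold beta'.
      rewrite lift_mu by exact Hl. rewrite comp_assoc, <- fmap_comp. reflexivity. }
  transitivity (h ∘ mu F L ∘ Mmap F (eta F L)).
  - rewrite <- comp_assoc, mu_Meta, comp_id_r. reflexivity.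
  - rewrite <- Ehm, ext_Mmap. reflexivity.
Qed.

Theorem unique_solution (L : A) (beta : Hom L (H (Mo F L))) :
  exists! g : Hom L C, c ∘ g = fmap H (ext F b g) ∘ beta.
Proof.
  destruct (Hterm (lift l beta)) as [h [Hh _]].
  exists (h ∘ eta F L). split.
  - rewrite <- (lift_morphism_is_ext Hh), comp_assoc, Hh, <- comp_assoc, lift_eta.
    reflexivity.
  - intros g Hg.
    rewrite (coalgebra_morphism_unique Hh (ext_coalgebra_morphism Hg)), ext_eta.
    reflexivity.
Qed.

End Interpretation.

Section FlatEquations.
Variables (A : Category) (P : BinProducts A) (S : BinCoproducts A).
Variables (H K : Functor A) (F : FreeAlgebras K).
Variable l : forall X : A, Hom (K (bprod P (H X) X)) (H (Mo F X)).
Hypothesis Hl : is_gsos_rule l.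
Variables (C : A) (c : Hom C (H C)) (cinv : Hom (H C) C).
Hypothesis Hterm : is_terminal_coalgebra c.
Hypothesis Hinv1 : cinv ∘ c = idm C.
Hypothesis Hinv2 : c ∘ cinv = idm (H C).
Variable b : Hom (K C) C.
Hypothesis Hb : is_interpretation l c b.
Variables (X : A) (e : Hom X (bcoprod S (Mo F (H (Mo F X))) C)).

Local Notation Y := (bcoprod S (H (Mo F X)) C).

Definition flat_rhs (s : Hom X C) : Hom X C :=
  copair S (ext F b (cinv ∘ fmap H (ext F b s))) (idm C) ∘ e.

(* The encoding of e as an equation of step 2 over Y = HMX + C: the comparison
   map tau : MHMX + C -> MY, its composite with e extended to sigma : MX -> MY,
   and the equation beta : Y -> HMY built from them. *)
Definition tau : Hom (bcoprod S (Mo F (H (Mo F X))) C) (Mo F Y) :=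
  copair S (Mmap F (inl_ S)) (eta F Y ∘ inr_ S).

Definition sigma : Hom (Mo F X) (Mo F Y) := ext F (phi F Y) (tau ∘ e).

Definition beta : Hom Y (H (Mo F Y)) :=
  copair S (fmap H sigma) (fmap H (eta F Y ∘ inr_ S) ∘ c).

Definition solution_of (g : Hom Y C) : Hom X C := ext F b g ∘ tau ∘ e.

Definition candidate_of (s : Hom X C) : Hom Y C :=
  copair S (cinv ∘ fmap H (ext F b s)) (idm C).

Lemma ext_sigma (g : Hom Y C) : ext F b g ∘ sigma = ext F b (solution_of g).
Proof. unfold sigma, solution_of. rewrite ext_kleisli, comp_assoc. reflexivity. Qed.

Lemma solution_of_copair (g : Hom Y C) :
  solution_of g = copair S (ext F b (g ∘ inl_ S)) (g ∘ inr_ S) ∘ e.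
Proof.
  unfold solution_of, tau.
  rewrite copair_comp, ext_Mmap, comp_assoc, ext_eta. reflexivity.
Qed.

Lemma flat_rhs_factors (s : Hom X C) : flat_rhs s = solution_of (candidate_of s).
Proof.
  rewrite solution_of_copair. unfold candidate_of.
  rewrite copair_inl, copair_inr. reflexivity.
Qed.

Lemma candidate_solves (s : Hom X C) :
  s = flat_rhs s ->
  c ∘ candidate_of s = fmap H (ext F b (candidate_of s)) ∘ beta.
Proof.
  intro Hs. apply copair_ext; rewrite <- !comp_assoc; unfold beta, candidate_of at 1.
  - rewrite !copair_inl, comp_assoc, Hinv2, comp_id_l, <- fmap_comp, ext_sigma,
      <- flat_rhs_factors, <- Hs. reflexivity.
  - rewrite !copair_inr, comp_id_r, comp_assoc, <- fmap_comp, comp_assoc, ext_eta.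
    unfold candidate_of. rewrite copair_inr, fmap_id, comp_id_l. reflexivity.
Qed.

(* Every solution g of beta arises from its solution of e; in particular
   g . inr = id by terminality of C. *)
Lemma solution_is_candidate (g : Hom Y C) :
  c ∘ g = fmap H (ext F b g) ∘ beta -> g = candidate_of (solution_of g).
Proof.
  intro Hg. apply copair_unique.
  - rewrite <- (comp_id_l (g ∘ inl_ S)), <- Hinv1, <- !comp_assoc, (comp_assoc c g), Hg.
    unfold beta. rewrite <- comp_assoc, copair_inl, <- fmap_comp, ext_sigma.
    reflexivity.
  - apply (coalgebra_morphism_unique Hterm (x := c)).
    + rewrite comp_assoc, Hg, <- comp_assoc. unfold beta.
      rewrite copair_inr, comp_assoc, <- fmap_comp, comp_assoc, ext_eta. reflexivity.
    + rewrite fmap_id, comp_id_l, comp_id_r. reflexivity.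
Qed.

Theorem flat_equation_unique_solution : exists! s : Hom X C, s = flat_rhs s.
Proof.
  destruct (unique_solution Hl Hterm Hb beta) as [g [Hg Ug]].
  exists (solution_of g). split.
  - rewrite flat_rhs_factors, <- (solution_is_candidate Hg). reflexivity.
  - intros s Hs.
    rewrite Hs, flat_rhs_factors, (Ug _ (candidate_solves Hs)). reflexivity.
Qed.

End FlatEquations.

(* The equation defining solutions for the MHM-algebra k' is that of flat_rhs. *)
Lemma cia_equation_rhs (A : Category) (S : BinCoproducts A) (H K : Functor A)
  (F : FreeAlgebras K) (C : A) (cinv : Hom (H C) C) (b : Hom (K C) C) (X : A)
  (s : Hom X C) :
  copair S (sharp F b ∘ Mmap F (cinv ∘ fmap H (sharp F b))) (idm C)
    ∘ coprod_map S (fmap (Fcomp (Mfun F) (Fcomp H (Mfun F))) s) (idm C)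
  = copair S (ext F b (cinv ∘ fmap H (ext F b s))) (idm C).
Proof.
  unfold coprod_map. simpl.
  rewrite copair_comp, !comp_assoc, copair_inl, copair_inr, comp_id_l,
    <- comp_assoc, <- Mmap_comp, <- comp_assoc, <- fmap_comp, !sharp_Mmap.
  reflexivity.
Qed.

Theorem mainTheorem3 (A : Category) (P : BinProducts A) (S : BinCoproducts A)
  (H K : Functor A) (C : A) (c : Hom C (H C)) (cinv : Hom (H C) C)
  (Hterm : @is_terminal_coalgebra A H C c)
  (Hinv1 : cinv ∘ c = idm C) (Hinv2 : c ∘ cinv = idm (H C))
  (F : FreeAlgebras K)
  (l : forall X : A, Hom (K (bprod P (H X) X)) (H (Mo F X)))
  (Hl : @is_gsos_rule A P H K F l)
  (b : Hom (K C) C) (Hb : @is_interpretation A P H K F l C c b) :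
  let k : Hom (H (Mo F C)) C := cinv ∘ fmap H (sharp F b) in
  let k' : Hom (Mo F (H (Mo F C))) C := sharp F b ∘ Mmap F k in
  @is_cia A S (Fcomp (Mfun F) (Fcomp H (Mfun F))) C k'.
Proof.
  intros k k' X e. unfold k', k.
  destruct (flat_equation_unique_solution Hl Hterm Hinv1 Hinv2 Hb e)
    as [s [Hs Us]].
  exists s. split.
  - rewrite cia_equation_rhs. exact Hs.
  - intros s' Hs'. apply Us. unfold flat_rhs. rewrite <- cia_equation_rhs. exact Hs'.
Qed.
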